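(* Let $b$ be a finite Blaschke product with $N$ zeros. If $S^{(1)}=\{S^{(1)}_i\}_{i=1}^N$ and $S^{(2)}=\{S^{(2)}_i\}_{i=1}^N$ are Cuntz families on $L^2(\mathbb{T})$ with $\alpha_{S^{(k)}}\circ\pi=\pi\circ\beta$ for $k=1,2$, then there is a unitary matrix $(u_{ij})\in M_N(L^\infty(\mathbb{T}))$ such that $$S^{(2)}_j=\sum_{i=1}^N S^{(1)}_i\pi(u_{ij}),\qquad j=1,\dots,N.$$ Conversely, if $S^{(1)},S^{(2)}$ are Cuntz families on $L^2(\mathbb{T})$ linked by this equation for some unitary $(u_{ij})\in M_N(L^\infty(\mathbb{T}))$, then $\alpha_{S^{(1)}}\circ\pi=\pi\circ\beta$ if and only if $\alpha_{S^{(2)}}\circ\pi=\pi\circ\beta$. Further, in that situation $\alpha_{S^{(1)}}=\alpha_{S^{(2)}}$ on $B(L^2(\mathbb{T}))$ if and only if $(u_{ij})$ is a unitary matrix of constant functions.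
   Context: $b=\prod_{j=1}^N b_{\alpha_j}$ is a finite Blaschke product with $N$ zeros in $\mathbb{D}$ ($b_w(z)=\frac{|w|}{w}\frac{w-z}{1-\overline{w}z}$, $b_0(z)=z$); $\beta(\varphi)=\varphi\circ b$ on $L^\infty(\mathbb{T})$. $\pi(\varphi)$ is multiplication by $\varphi$ on $L^2(\mathbb{T})$. A Cuntz family $\{S_i\}_{i=1}^N$ on a Hilbert space $H$ consists of isometries with $S_i^*S_j=\delta_{ij}I$ and $\sum_iS_iS_i^*=I$, and $\alpha_S(T)=\sum_iS_iTS_i^*$ for $T\in B(H)$. A matrix $U\in M_N(L^\infty(\mathbb{T}))$ is unitary if $UU^*=U^*U=I$. *)

From mathcomp Require Import all_boot all_algebra.
From mathcomp Require Import all_classical all_reals all_analysis.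
From mathcomp Require Import complex.
Import GRing.Theory Num.Theory.
Set Implicit Arguments. Unset Strict Implicit. Unset Printing Implicit Defensive.
Local Open Scope ring_scope.
Local Open Scope complex_scope.
Local Open Scope classical_set_scope.

(* Functions "on T" are represented as functions C -> C; only their values
   on the unit circle matter.  The measure on T is (normalised-free)
   Lebesgue measure dt on [0, 2pi] (normalisation is irrelevant here). *)

Definition circ (R : realType) (t : R) : R[i] := cos t +i* sin t.

Definition Tdom (R : realType) : set R := `[0, 2 * pi]%classic.
Arguments Tdom : clear implicits.

Definition fn (R : realType) := R[i] -> R[i].

Definition reT (R : realType) (f : fn R) : R -> R := fun t => complex.Re (f (circ t)).
Definition imT (R : realType) (f : fn R) : R -> R := fun t => complex.Im (f (circ t)).

Definition cmeas (R : realType) (f : fn R) : Prop :=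
  measurable_fun (Tdom R) (reT f) /\ measurable_fun (Tdom R) (imT f).

Definition abs2T (R : realType) (f : fn R) : R -> R :=
  fun t => reT f t ^+ 2 + imT f t ^+ 2.

Definition aeq (R : realType) (f g : fn R) : Prop :=
  {ae (@lebesgue_measure R), forall t, Tdom R t -> f (circ t) = g (circ t)}.

Definition L2 (R : realType) (f : fn R) : Prop :=
  cmeas f /\
  (\int[@lebesgue_measure R]_(t in Tdom R) (abs2T f t)%:E < +oo)%E.

Definition Linf (R : realType) (f : fn R) : Prop :=
  cmeas f /\ exists M : R,
    {ae (@lebesgue_measure R), forall t, Tdom R t -> abs2T f t <= M}.

Definition sqnorm (R : realType) (f : fn R) : R :=
  Rintegral (@lebesgue_measure R) (Tdom R) (abs2T f).

Definition ip (R : realType) (f g : fn R) : R[i] :=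
  let h := fun z => f z * (g z)^* in
  Rintegral (@lebesgue_measure R) (Tdom R) (reT h)
  +i* Rintegral (@lebesgue_measure R) (Tdom R) (imT h).

Definition op (R : realType) := fn R -> fn R.

Definition opeq (R : realType) (A B : op R) : Prop :=
  forall f, L2 f -> aeq (A f) (B f).

Definition bounded_op (R : realType) (A : op R) : Prop :=
  [/\ forall f, L2 f -> L2 (A f),
      forall f g, L2 f -> L2 g -> aeq f g -> aeq (A f) (A g),
      forall (c : R[i]) f g, L2 f -> L2 g ->
        aeq (A (fun z => c * f z + g z)) (fun z => c * A f z + A g z)
    & exists M : R, forall f, L2 f -> sqnorm (A f) <= M * sqnorm f].

Definition is_adjoint (R : realType) (A As : op R) : Prop :=
  bounded_op As /\ forall f g, L2 f -> L2 g -> ip (A f) g = ip f (As g).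

Definition idop (R : realType) : op R := fun f => f.
Arguments idop : clear implicits.
Definition zeroop (R : realType) : op R := fun _ _ => 0.
Arguments zeroop : clear implicits.
Definition compop (R : realType) (A B : op R) : op R := fun f => A (B f).

Definition mulop (R : realType) (phi : fn R) : op R := fun f z => phi z * f z.

Definition cuntz (R : realType) (N : nat) (S Ss : 'I_N -> op R) : Prop :=
  [/\ forall i, bounded_op (S i),
      forall i, is_adjoint (S i) (Ss i),
      forall i j, opeq (compop (Ss i) (S j)) (if i == j then @idop R else @zeroop R)
    & opeq (fun f z => \sum_(i < N) S i (Ss i f) z) (@idop R)].

Definition alphaS (R : realType) (N : nat) (S Ss : 'I_N -> op R) (A : op R) : op R :=
  fun f z => \sum_(i < N) S i (A (Ss i f)) z.

Definition bfac (R : realType) (w : R[i]) : R[i] -> R[i] :=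
  if w == 0 then (fun z => z)
  else (fun z => (`|w| / w) * ((w - z) / (1 - w^* * z))).

Definition blaschke (R : realType) (N : nat) (a : 'I_N -> R[i]) : R[i] -> R[i] :=
  fun z => \prod_(j < N) bfac (a j) z.

Definition intertwines (R : realType) (N : nat) (b : R[i] -> R[i])
    (S Ss : 'I_N -> op R) : Prop :=
  forall phi : fn R, Linf phi ->
    opeq (alphaS S Ss (mulop phi)) (mulop (fun z => phi (b z))).

Definition unitary_Linf (R : realType) (N : nat) (u : 'I_N -> 'I_N -> fn R) : Prop :=
  [/\ forall i j, Linf (u i j),
      forall i j, aeq (fun z => \sum_(k < N) u i k z * (u j k z)^*)
                      (fun _ => if i == j then 1 else 0)
    & forall i j, aeq (fun z => \sum_(k < N) (u k i z)^* * u k j z)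
                      (fun _ => if i == j then 1 else 0)].

Definition linked (R : realType) (N : nat) (S1 S2 : 'I_N -> op R)
    (u : 'I_N -> 'I_N -> fn R) : Prop :=
  forall j, opeq (S2 j) (fun f z => \sum_(i < N) S1 i (mulop (u i j) f) z).

Definition constant_mx (R : realType) (N : nat) (u : 'I_N -> 'I_N -> fn R) : Prop :=
  exists c : 'I_N -> 'I_N -> R[i], forall i j, aeq (u i j) (fun _ => c i j).

From mathcomp Require Import all_boot all_order all_algebra.
From mathcomp Require Import all_classical all_reals all_analysis.
From mathcomp Require Import complex.
From mathcomp Require Import ring lra.
Import Order.TTheory GRing.Theory Num.Theory numFieldNormedType.Exports.
Set Implicit Arguments. Unset Strict Implicit. Unset Printing Implicit Defensive.
Local Open Scope ring_scope.
Local Open Scope complex_scope.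
Local Open Scope classical_set_scope.

(* If a Cuntz family S satisfies alpha_S o pi = pi o beta, then
   S_j pi(phi) = pi(phi o b) S_j and S_i^* pi(phi o b) = pi(phi) S_i^*.  For two
   such families every T_ij = S1_i^* S2_j therefore commutes with all
   multiplication operators, so it is multiplication by u_ij := T_ij 1, and the
   Cuntz relations give S2_j = sum_i S1_i pi(u_ij).  The coefficients of S1 with
   respect to S2 form both the inverse and the adjoint of (u_ij), which is thus
   unitary.
   Conversely, if S2_j = sum_i S1_i pi(u_ij) then
   alpha_S2(A) = sum_i S1_i B_i with B_i = sum_j pi(u_ij) A S2_j^*, while
   S1_i^* = sum_j pi(u_ij) S2_j^*.
   Hence alpha_S2(A) = alpha_S1(A) whenever A commutes with the pi(u_ij): always
   for A = pi(phi), and for every A when the u_ij are constant.  Testing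
   alpha_S1 = alpha_S2 on the projection f |-> <f, 1> 1 at S2_l 1 shows that
   u_kl equals its own mean. *)

Section Corollary.
Variable R : realType.
Local Notation mu := (@lebesgue_measure R).
Local Notation D := (Tdom R).
Local Notation Re := complex.Re.
Local Notation Im := complex.Im.

(** * Complex arithmetic *)

Lemma ReM (x y : R[i]) : Re (x * y) = Re x * Re y - Im x * Im y.
Proof. by case: x => a b; case: y => c d. Qed.
Lemma ImM (x y : R[i]) : Im (x * y) = Re x * Im y + Im x * Re y.
Proof. by case: x => a b; case: y => c d. Qed.
Lemma ReD (x y : R[i]) : Re (x + y) = Re x + Re y.
Proof. by case: x => a b; case: y => c d. Qed.
Lemma ImD (x y : R[i]) : Im (x + y) = Im x + Im y.
Proof. by case: x => a b; case: y => c d. Qed.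
Lemma ReC (x : R[i]) : Re (x^*) = Re x.
Proof. by case: x. Qed.
Lemma ImC (x : R[i]) : Im (x^*) = - Im x.
Proof. by case: x. Qed.
Lemma Re_sum (I : finType) (F : I -> R[i]) : Re (\sum_i F i) = \sum_i Re (F i).
Proof. by elim/big_rec2: _ => // k x y _ <-; rewrite ReD. Qed.

Definition nrm2 (x : R[i]) : R := Re x ^+ 2 + Im x ^+ 2.

Lemma nrm2_ge0 x : 0 <= nrm2 x.
Proof. by rewrite /nrm2 addr_ge0 // sqr_ge0. Qed.
Lemma nrm2M x y : nrm2 (x * y) = nrm2 x * nrm2 y.
Proof. rewrite /nrm2 ReM ImM; ring. Qed.
Lemma nrm2_conj x : nrm2 (x^*) = nrm2 x.
Proof. by rewrite /nrm2 ReC ImC sqrrN. Qed.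
Lemma mulc_conj (x : R[i]) : x * x^* = (nrm2 x)%:C.
Proof.
case: x => a b; rewrite /nrm2 /=; apply/eqP; rewrite eq_complex /=.
by apply/andP; split; apply/eqP; ring.
Qed.
Lemma nrm2_eq0 x : nrm2 x = 0 -> x = 0.
Proof.
case: x => a b; rewrite /nrm2 /= => h.
have ha : a ^+ 2 = 0 by apply/eqP; rewrite eq_le sqr_ge0 andbT -h lerDl sqr_ge0.
have hb : b ^+ 2 = 0 by move: h; rewrite ha add0r.
by move/eqP: ha; rewrite sqrf_eq0 => /eqP ->; move/eqP: hb; rewrite sqrf_eq0 => /eqP ->.
Qed.
Lemma nrm2D x y : nrm2 (x + y) <= 2 * nrm2 x + 2 * nrm2 y.
Proof.
rewrite /nrm2 ReD ImD.
have h (a b : R) : (a + b) ^+ 2 <= 2 * a ^+ 2 + 2 * b ^+ 2.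
  by rewrite -subr_ge0 (_ : _ - _ = (a - b) ^+ 2) ?sqr_ge0 //; ring.
have := h (Re x) (Re y); have := h (Im x) (Im y); lra.
Qed.
Lemma normr_Re_le x : `|Re x| <= (1 + nrm2 x) / 2.
Proof.
rewrite /nrm2 ler_norml; apply/andP; split.
- have := sqr_ge0 (Re x + 1); have := sqr_ge0 (Im x); rewrite !expr2; nra.
- have := sqr_ge0 (Re x - 1); have := sqr_ge0 (Im x); rewrite !expr2; nra.
Qed.
Lemma normr_Im_le x : `|Im x| <= (1 + nrm2 x) / 2.
Proof.
rewrite /nrm2 ler_norml; apply/andP; split.
- have := sqr_ge0 (Im x + 1); have := sqr_ge0 (Re x); rewrite !expr2; nra.
- have := sqr_ge0 (Im x - 1); have := sqr_ge0 (Re x); rewrite !expr2; nra.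
Qed.
Lemma normr_ReM_le x y : `|Re (x * y)| <= (nrm2 x + nrm2 y) / 2.
Proof.
rewrite ReM /nrm2 ler_norml; apply/andP; split.
- have := sqr_ge0 (Re x + Re y); have := sqr_ge0 (Im x - Im y); rewrite !expr2; nra.
- have := sqr_ge0 (Re x - Re y); have := sqr_ge0 (Im x + Im y); rewrite !expr2; nra.
Qed.
Lemma normr_ImM_le x y : `|Im (x * y)| <= (nrm2 x + nrm2 y) / 2.
Proof.
rewrite ImM /nrm2 ler_norml; apply/andP; split.
- have := sqr_ge0 (Re x + Im y); have := sqr_ge0 (Im x + Re y); rewrite !expr2; nra.
- have := sqr_ge0 (Re x - Im y); have := sqr_ge0 (Im x - Re y); rewrite !expr2; nra.
Qed.
Lemma sqr_Re_le x : Re x ^+ 2 <= nrm2 x.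
Proof. by rewrite /nrm2 lerDl sqr_ge0. Qed.
Lemma sqr_Im_le x : Im x ^+ 2 <= nrm2 x.
Proof. by rewrite /nrm2 lerDr sqr_ge0. Qed.

Lemma Re_mul_conj_sub (a c : R[i]) (p : R) :
  Re (a * (p%:C * (a - c^*))^*) - Re (1 * (c * (p%:C * (a - c^*)))^*) = p * nrm2 (a - c^*).
Proof. by case: a => a1 a2; case: c => c1 c2; rewrite /nrm2 /=; ring. Qed.

Lemma abs2TE (f : fn R) t : abs2T f t = nrm2 (f (circ t)).
Proof. by []. Qed.

Lemma unitary_cols_of_rows (N : nat) (M : 'M[R[i]]_N) :
  (forall i j, \sum_k M i k * (M j k)^* = if i == j then 1 else 0) ->
  forall i j, \sum_k (M k i)^* * M k j = if i == j then 1 else 0.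
Proof.
move=> rows i j.
pose Mc := \matrix_(k < N, l < N) (M l k)^*.
have MMc : M *m Mc = 1%:M.
  apply/matrixP => k l; rewrite !mxE.
  transitivity (if k == l then 1 else 0 : R[i]); last by case: (k == l).
  by rewrite -(rows k l); apply: eq_bigr => m _; rewrite mxE.
have := congr1 (fun A : 'M[R[i]]_N => A i j) (mulmx1C MMc); rewrite /= !mxE => e.
transitivity (\sum_k Mc i k * M k j); first by apply: eq_bigr => k _; rewrite mxE.
by rewrite e; case: (i == j).
Qed.

Lemma measurable_Tdom : @measurable _ (measurableTypeR R) D.
Proof. exact: measurable_itv. Qed.

Lemma lebesgue_measure_Tdom : mu D = (2 * pi)%:E.
Proof.
rewrite /Tdom lebesgue_measure_itv /= lte_fin mulr_gt0 // ?pi_gt0 //.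
by rewrite oppr0 adde0.
Qed.

Lemma aeS (P Q : R -> Prop) :
  (forall t, P t -> Q t) -> {ae mu, forall t, P t} -> {ae mu, forall t, Q t}.
Proof. by move=> H; exact: (@filterS _ _ (ae_filter_ringOfSetsType mu)). Qed.
Lemma aeS2 (P Q S : R -> Prop) : (forall t, P t -> Q t -> S t) ->
  {ae mu, forall t, P t} -> {ae mu, forall t, Q t} -> {ae mu, forall t, S t}.
Proof. by move=> H; exact: (@filterS2 _ _ (ae_filter_ringOfSetsType mu)). Qed.

Lemma ae_forall (I : finType) (P : I -> R -> Prop) :
  (forall i, {ae mu, forall t, P i t}) -> {ae mu, forall t, forall i, P i t}.
Proof.
move=> H.
suff Hs (s : seq I) : {ae mu, forall t, forall i, i \in s -> P i t}.
  by apply: aeS (Hs (enum I)) => t Ht i; apply: Ht; rewrite mem_enum.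
elim: s => [|a s IH]; first by apply: aeW.
by apply: aeS2 (H a) IH => t Ha Hs i; rewrite inE => /orP [/eqP -> //|]; exact: Hs.
Qed.

Lemma aeq_refl (f : fn R) : aeq f f.
Proof. exact: aeW. Qed.
Lemma aeq_sym (f g : fn R) : aeq f g -> aeq g f.
Proof. by apply: aeS => t H Dt; rewrite H. Qed.
Lemma aeq_trans (f g h : fn R) : aeq f g -> aeq g h -> aeq f h.
Proof. by move=> H1 H2; apply: aeS2 H1 H2 => t H1 H2 Dt; rewrite H1 // H2. Qed.
Lemma aeqW (f g : fn R) : (forall z, f z = g z) -> aeq f g.
Proof. by move=> H; apply: aeW => t _; rewrite H. Qed.
Lemma aeq_map (k : R[i] -> R[i]) (f g : fn R) :
  aeq f g -> aeq (fun z => k (f z)) (fun z => k (g z)).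
Proof. by apply: aeS => t H Dt; rewrite H. Qed.
Lemma aeq_mul (f1 f2 g1 g2 : fn R) : aeq f1 g1 -> aeq f2 g2 ->
  aeq (fun z => f1 z * f2 z) (fun z => g1 z * g2 z).
Proof. by move=> H1 H2; apply: aeS2 H1 H2 => t H1 H2 Dt /=; rewrite H1 // H2. Qed.
Lemma aeq_mull (c f g : fn R) : aeq f g -> aeq (fun z => c z * f z) (fun z => c z * g z).
Proof. by move=> H; apply: aeq_mul => //; exact: aeq_refl. Qed.
Lemma aeq_sum (I : finType) (F G : I -> fn R) :
  (forall i, aeq (F i) (G i)) -> aeq (fun z => \sum_i F i z) (fun z => \sum_i G i z).
Proof.
move=> H; apply: aeS (ae_forall H) => t Ht Dt.
by apply: eq_bigr => i _; rewrite Ht.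
Qed.
Lemma aeq_sum_delta (I : finType) (k : I) (F : I -> fn R) (G : fn R) :
  (forall i, aeq (F i) (fun z => if i == k then G z else 0)) ->
  aeq (fun z => \sum_i F i z) G.
Proof.
move=> H; apply: aeq_trans (aeq_sum H) _; apply: aeqW => z.
by rewrite -big_mkcond /= big_pred1_eq.
Qed.

(** * Measurable, integrable and square-integrable functions *)

Lemma measurable_abs2T (f : fn R) : cmeas f -> measurable_fun D (abs2T f).
Proof.
by case=> h1 h2; apply: measurable_realfun.measurable_funD;
  apply: measurable_realfun.measurable_funX.
Qed.

Lemma cmeas_cst (c : R[i]) : cmeas (fun _ => c).
Proof. by split; apply: measurable_cst. Qed.
Lemma cmeasD (f g : fn R) : cmeas f -> cmeas g -> cmeas (fun z => f z + g z).
Proof.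
case=> f1 f2 [g1 g2]; split.
- have -> : reT (fun z => f z + g z) = reT f \+ reT g.
    by apply/funext => t; rewrite /reT ReD.
  exact: measurable_realfun.measurable_funD.
- have -> : imT (fun z => f z + g z) = imT f \+ imT g.
    by apply/funext => t; rewrite /imT ImD.
  exact: measurable_realfun.measurable_funD.
Qed.
Lemma cmeasM (f g : fn R) : cmeas f -> cmeas g -> cmeas (fun z => f z * g z).
Proof.
case=> f1 f2 [g1 g2]; split.
- have -> : reT (fun z => f z * g z) = (reT f \* reT g) \- (imT f \* imT g).
    by apply/funext => t; rewrite /reT /imT ReM.
  by apply: measurable_realfun.measurable_funB; apply: measurable_realfun.measurable_funM.
- have -> : imT (fun z => f z * g z) = (reT f \* imT g) \+ (imT f \* reT g).
    by apply/funext => t; rewrite /reT /imT ImM.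
  by apply: measurable_realfun.measurable_funD; apply: measurable_realfun.measurable_funM.
Qed.
Lemma cmeas_conj (f : fn R) : cmeas f -> cmeas (fun z => (f z)^*).
Proof.
case=> f1 f2; split.
- by have -> : reT (fun z => (f z)^*) = reT f by apply/funext => t; rewrite /reT ReC.
- have -> : imT (fun z => (f z)^*) = \- imT f by apply/funext => t; rewrite /imT ImC.
  exact: measurable_realfun.measurable_funN.
Qed.

Definition Tintegrable (h : R -> R) : Prop := mu.-integrable D (EFin \o h).

Lemma Tintegrable_cst (k : R) : Tintegrable (fun _ => k).
Proof.
apply/integrableP; split; first exact/measurable_realfun.measurable_EFinP/measurable_cst.
have -> : (fun x => `|(EFin \o (fun _ : R => k)) x|%E) = cst (`|k|%:E).
  by apply/funext => t; rewrite /comp abse_EFin.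
rewrite integral_cst; last exact: measurable_Tdom.
rewrite -[X in (_ * X)%E]/(lebesgue_measure D) lebesgue_measure_Tdom; exact: ltry.
Qed.
Lemma TintegrableD (h1 h2 : R -> R) :
  Tintegrable h1 -> Tintegrable h2 -> Tintegrable (fun t => h1 t + h2 t).
Proof.
move=> H1 H2; apply: (eq_integrable measurable_Tdom _ _ _ (integrableD measurable_Tdom H1 H2)).
by move=> t _; rewrite /= EFinD.
Qed.
Lemma TintegrableZ (k : R) (h : R -> R) : Tintegrable h -> Tintegrable (fun t => k * h t).
Proof.
move=> H; apply: (eq_integrable measurable_Tdom _ _ _ (integrableZl measurable_Tdom k H)).
by move=> t _; rewrite /= EFinM.
Qed.
Lemma TintegrableB (h1 h2 : R -> R) :
  Tintegrable h1 -> Tintegrable h2 -> Tintegrable (fun t => h1 t - h2 t).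
Proof.
move=> H1 H2; apply: TintegrableD => //.
apply: (eq_integrable measurable_Tdom _ _ _ (TintegrableZ (-1) H2)) => t _ /=.
by rewrite mulN1r.
Qed.
Lemma Tintegrable_le (h g : R -> R) : measurable_fun D h -> Tintegrable g ->
  (forall t, D t -> `|h t| <= g t) -> Tintegrable h.
Proof.
move=> mh Hg hg; apply: (le_integrable measurable_Tdom _ _ Hg).
  exact/measurable_realfun.measurable_EFinP.
move=> t Dt; rewrite /comp ?abse_EFin lee_fin.
by apply: (le_trans (hg t Dt)); apply: ler_norm.
Qed.
Lemma eq_Tintegrable (h g : R -> R) :
  (forall t, D t -> h t = g t) -> Tintegrable h -> Tintegrable g.
Proof.
move=> hg H; apply: (eq_integrable measurable_Tdom _ _ _ H) => t /set_mem Dt /=.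
by rewrite hg.
Qed.

Lemma L2_cmeas (f : fn R) : L2 f -> cmeas f.
Proof. by case. Qed.

Lemma L2_Tintegrable (f : fn R) : L2 f -> Tintegrable (abs2T f).
Proof.
case=> cf fin; apply/integrableP; split.
  by apply/measurable_realfun.measurable_EFinP; exact: measurable_abs2T.
apply: le_lt_trans fin; rewrite le_eqVlt; apply/orP; left; apply/eqP.
apply: eq_integral => t _; rewrite /comp ?abse_EFin ger0_norm //; exact: nrm2_ge0.
Qed.

Lemma L2_le (g : fn R) (F : R -> R) : cmeas g -> Tintegrable F ->
  {ae mu, forall t, D t -> abs2T g t <= F t} -> L2 g.
Proof.
move=> cg HF bd; split => //.
have /integrableP [mF fin] := HF.
have mF' : measurable_fun D F by apply/measurable_realfun.measurable_EFinP.
have fin' : (\int[mu]_(t in D) (`|F t|)%:E < +oo)%E.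
  apply: le_lt_trans fin; rewrite le_eqVlt; apply/orP; left; apply/eqP.
  by apply: eq_integral => t _; rewrite /comp ?abse_EFin.
apply: le_lt_trans fin'; apply: (ae_ge0_le_integral measurable_Tdom).
- by move=> t _; rewrite lee_fin; exact: nrm2_ge0.
- by apply/measurable_realfun.measurable_EFinP; exact: measurable_abs2T.
- by move=> t _; rewrite lee_fin normr_ge0.
- by apply/measurable_realfun.measurable_EFinP; exact: (measurableT_comp _ mF').
- apply: aeS bd => t H Dt; rewrite lee_fin.
  by apply: (le_trans (H Dt)); apply: ler_norm.
Qed.

Lemma L2_cst (c : R[i]) : L2 (fun _ => c).
Proof.
apply: (@L2_le _ (fun _ => nrm2 c)); first exact: cmeas_cst.
- exact: Tintegrable_cst.
- by apply: aeW => t _.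
Qed.
Lemma L2D (f g : fn R) : L2 f -> L2 g -> L2 (fun z => f z + g z).
Proof.
move=> Hf Hg; apply: (@L2_le _ (fun t => 2 * abs2T f t + 2 * abs2T g t)).
- by apply: cmeasD; apply: L2_cmeas.
- by apply: TintegrableD; apply: TintegrableZ; apply: L2_Tintegrable.
- by apply: aeW => t Dt; exact: nrm2D.
Qed.
Lemma L2_mul_bounded (phi : fn R) (M : R) (f : fn R) : cmeas phi ->
  {ae mu, forall t, D t -> abs2T phi t <= M} -> L2 f -> L2 (fun z => phi z * f z).
Proof.
move=> cphi bd Hf; apply: (@L2_le _ (fun t => M * abs2T f t)).
- by apply: cmeasM => //; apply: L2_cmeas.
- by apply: TintegrableZ; apply: L2_Tintegrable.
- apply: aeS bd => t H Dt; rewrite !abs2TE nrm2M.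
  by apply: ler_wpM2r; [exact: nrm2_ge0 | exact: H].
Qed.
Lemma L2_mulLinf (phi f : fn R) : Linf phi -> L2 f -> L2 (fun z => phi z * f z).
Proof. by case=> cphi [M bd]; apply: L2_mul_bounded bd. Qed.
Lemma L2Z (c : R[i]) (f : fn R) : L2 f -> L2 (fun z => c * f z).
Proof.
apply: (@L2_mul_bounded (fun _ => c) (nrm2 c)); first exact: cmeas_cst.
by apply: aeW => t _.
Qed.
Lemma L2_conj (f : fn R) : L2 f -> L2 (fun z => (f z)^*).
Proof.
move=> Hf; apply: (@L2_le _ (abs2T f)); first exact/cmeas_conj/L2_cmeas.
- exact: L2_Tintegrable.
- by apply: aeW => t _; rewrite !abs2TE nrm2_conj.
Qed.
Lemma L2B (f g : fn R) : L2 f -> L2 g -> L2 (fun z => f z - g z).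
Proof.
move=> Hf Hg; have -> : (fun z => f z - g z) = (fun z => f z + (-1) * g z).
  by apply/funext => z; rewrite mulN1r.
by apply: L2D => //; apply: L2Z.
Qed.
Lemma L2_aeq (f g : fn R) : L2 f -> cmeas g -> aeq f g -> L2 g.
Proof.
move=> Hf cg H; apply: (@L2_le _ (abs2T f)) => //; first exact: L2_Tintegrable.
by apply: aeS H => t H Dt; rewrite !abs2TE H.
Qed.
Lemma L2_big (I : Type) (s : seq I) (F : I -> fn R) :
  (forall i, L2 (F i)) -> L2 (fun z => \sum_(i <- s) F i z).
Proof.
move=> H; elim: s => [|a s IH].
  have -> : (fun z => \sum_(i <- [::]) F i z) = (fun _ => 0).
    by apply/funext => z; rewrite big_nil.
  exact: L2_cst.
have -> : (fun z => \sum_(i <- a :: s) F i z) = (fun z => F a z + \sum_(i <- s) F i z).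
  by apply/funext => z; rewrite big_cons.
exact: L2D.
Qed.
Lemma L2_sum (I : finType) (F : I -> fn R) :
  (forall i, L2 (F i)) -> L2 (fun z => \sum_i F i z).
Proof. exact: L2_big. Qed.

Definition one : fn R := fun _ => 1.
Lemma L2_one : L2 one. Proof. exact: L2_cst. Qed.

Lemma L2_Linf (phi : fn R) : Linf phi -> L2 phi.
Proof.
move=> H; have := L2_mulLinf H L2_one.
by have -> : (fun z => phi z * one z) = phi by apply/funext => z; rewrite /one mulr1.
Qed.

Lemma Tintegrable_reT (f : fn R) : L2 f -> Tintegrable (reT f).
Proof.
move=> Hf; apply: (@Tintegrable_le _ (fun t => (1 + abs2T f t) / 2)).
- by case: (L2_cmeas Hf).
- under [X in Tintegrable X]funext do rewrite mulrC.
  by apply: TintegrableZ; apply: TintegrableD; [exact: Tintegrable_cst | exact: L2_Tintegrable].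
- by move=> t _; exact: normr_Re_le.
Qed.
Lemma Tintegrable_imT (f : fn R) : L2 f -> Tintegrable (imT f).
Proof.
move=> Hf; apply: (@Tintegrable_le _ (fun t => (1 + abs2T f t) / 2)).
- by case: (L2_cmeas Hf).
- under [X in Tintegrable X]funext do rewrite mulrC.
  by apply: TintegrableZ; apply: TintegrableD; [exact: Tintegrable_cst | exact: L2_Tintegrable].
- by move=> t _; exact: normr_Im_le.
Qed.
Lemma Tintegrable_reTM (f g : fn R) : L2 f -> L2 g -> Tintegrable (reT (fun z => f z * g z)).
Proof.
move=> Hf Hg; apply: (@Tintegrable_le _ (fun t => (abs2T f t + abs2T g t) / 2)).
- by case: (cmeasM (L2_cmeas Hf) (L2_cmeas Hg)).
- under [X in Tintegrable X]funext do rewrite mulrC.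
  by apply: TintegrableZ; apply: TintegrableD; exact: L2_Tintegrable.
- by move=> t _; exact: normr_ReM_le.
Qed.
Lemma Tintegrable_imTM (f g : fn R) : L2 f -> L2 g -> Tintegrable (imT (fun z => f z * g z)).
Proof.
move=> Hf Hg; apply: (@Tintegrable_le _ (fun t => (abs2T f t + abs2T g t) / 2)).
- by case: (cmeasM (L2_cmeas Hf) (L2_cmeas Hg)).
- under [X in Tintegrable X]funext do rewrite mulrC.
  by apply: TintegrableZ; apply: TintegrableD; exact: L2_Tintegrable.
- by move=> t _; exact: normr_ImM_le.
Qed.
Lemma Tintegrable_sqr_reT (f : fn R) : L2 f -> Tintegrable (fun t => reT f t ^+ 2).
Proof.
move=> Hf; apply: (Tintegrable_le (g := abs2T f)).
- by case: (L2_cmeas Hf) => m1 _; apply: measurable_realfun.measurable_funX.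
- exact: L2_Tintegrable.
- by move=> t _; rewrite ger0_norm ?sqr_ge0 //; exact: sqr_Re_le.
Qed.
Lemma Tintegrable_sqr_imT (f : fn R) : L2 f -> Tintegrable (fun t => imT f t ^+ 2).
Proof.
move=> Hf; apply: (Tintegrable_le (g := abs2T f)).
- by case: (L2_cmeas Hf) => _ m2; apply: measurable_realfun.measurable_funX.
- exact: L2_Tintegrable.
- by move=> t _; rewrite ger0_norm ?sqr_ge0 //; exact: sqr_Im_le.
Qed.

(* cutoff f = 1 / (1 + |f|^2): both cutoff f and (cutoff f) f are bounded, and
   cutoff f never vanishes, so identities tested on L^infty multipliers can be
   transferred to an arbitrary f in L^2. *)
Definition inv1pn (x : R) : R := (1 + `|x|)^-1.
Definition cutoff (f : fn R) : fn R := fun z => (inv1pn (nrm2 (f z)))%:C.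

Lemma inv1pn_gt0 x : 0 < inv1pn x.
Proof. by rewrite /inv1pn invr_gt0 ltr_pwDl // normr_ge0. Qed.
Lemma inv1pn_le1 x : inv1pn x <= 1.
Proof.
have h : 0 < 1 + `|x| by rewrite ltr_pwDl // normr_ge0.
by rewrite /inv1pn invf_le1 // lerDl normr_ge0.
Qed.
Lemma measurable_inv1pn : measurable_fun setT inv1pn.
Proof.
apply: measurable_realfun.continuous_measurable_fun => x; apply: cvgV.
  by rewrite gt_eqF // ltr_pwDl // normr_ge0.
by apply: cvgD; [exact: cvg_cst | exact: (@norm_continuous _ R x)].
Qed.

Lemma cutoff_neq0 (f : fn R) z : cutoff f z != 0.
Proof. by rewrite /cutoff eq_complex /= negb_and gt_eqF // inv1pn_gt0. Qed.

Lemma Linf_cutoff (f : fn R) : cmeas f -> Linf (cutoff f).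
Proof.
move=> cf; split.
  split; last exact: measurable_cst.
  have -> : reT (cutoff f) = inv1pn \o abs2T f by [].
  by apply: measurableT_comp; [exact: measurable_inv1pn | exact: measurable_abs2T].
exists 1; apply: aeW => t _; rewrite abs2TE /cutoff /nrm2 /= expr0n /= addr0.
have h1 := inv1pn_gt0 (nrm2 (f (circ t))); have h2 := inv1pn_le1 (nrm2 (f (circ t))).
by rewrite expr2 mulr_ile1 // ltW.
Qed.
Lemma Linf_cutoffM (f : fn R) : cmeas f -> Linf (fun z => cutoff f z * f z).
Proof.
move=> cf; split; first by apply: cmeasM => //; exact: (Linf_cutoff cf).1.
exists 1; apply: aeW => t _; rewrite abs2TE nrm2M /cutoff /inv1pn.
set x := nrm2 (f (circ t)).
have x0 : 0 <= x by apply: nrm2_ge0.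
rewrite /nrm2 /= expr0n /= addr0 ger0_norm //.
set y := (1 + x)^-1.
have y0 : 0 < y by rewrite invr_gt0 ltr_pwDl.
have yx : y * (1 + x) = 1 by rewrite mulVf // gt_eqF // ltr_pwDl.
rewrite expr2; nra.
Qed.

Lemma Rintegral_aeq (h1 h2 : R -> R) : measurable_fun D h1 -> measurable_fun D h2 ->
  {ae mu, forall t, D t -> h1 t = h2 t} -> Rintegral mu D h1 = Rintegral mu D h2.
Proof.
move=> m1 m2 H; rewrite /Rintegral; congr fine.
apply: ae_eq_integral; first exact: measurable_Tdom.
- by apply/measurable_realfun.measurable_EFinP.
- by apply/measurable_realfun.measurable_EFinP.
- by apply: aeS H => t H Dt /=; rewrite H.
Qed.

Lemma Rintegral_ae_eq0 (phi : R -> R) : Tintegrable phi -> (forall t, D t -> 0 <= phi t) ->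
  Rintegral mu D phi = 0 -> {ae mu, forall t, D t -> phi t = 0}.
Proof.
move=> Hp p0 H0.
have fin := integrable_fin_num measurable_Tdom Hp.
have I0 : (\int[mu]_(x in D) (EFin \o phi) x = 0)%E.
  by rewrite -(fineK fin); rewrite /Rintegral in H0; rewrite H0.
have /integrableP [mE _] := Hp.
have : (\int[mu]_(x in D) `|(EFin \o phi) x| = 0)%E.
  rewrite -I0; apply: eq_integral => t /set_mem Dt; rewrite /comp ?abse_EFin ger0_norm //.
  exact: p0.
move/(ae_eq_integral_abs mu measurable_Tdom mE).
by apply: aeS => t H Dt; have := H Dt => /= [[]].
Qed.

Lemma Rintegral_cst_T (k : R) : Rintegral mu D (fun _ => k) = k * (2 * pi).
Proof.
rewrite Rintegral_cst; last exact: measurable_Tdom.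
by rewrite -[X in fine X]/(lebesgue_measure D) lebesgue_measure_Tdom.
Qed.
Lemma RintegralD_T (h1 h2 : R -> R) : Tintegrable h1 -> Tintegrable h2 ->
  Rintegral mu D (fun t => h1 t + h2 t) = Rintegral mu D h1 + Rintegral mu D h2.
Proof. by move=> r1 r2; apply: RintegralD => //; exact: measurable_Tdom. Qed.
Lemma RintegralZ_T (k : R) (h : R -> R) : Tintegrable h ->
  Rintegral mu D (fun t => k * h t) = k * Rintegral mu D h.
Proof. by move=> r; apply: RintegralZl => //; exact: measurable_Tdom. Qed.
Lemma RintegralN_T (h : R -> R) : Tintegrable h ->
  Rintegral mu D (fun t => - h t) = - Rintegral mu D h.
Proof.
move=> Hh; rewrite -mulN1r -RintegralZ_T //.
by apply: eq_Rintegral => t _; rewrite mulN1r.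
Qed.

(* Cauchy-Schwarz against the constant 1, from the integral of (h - mean h)^2. *)
Lemma sqr_Rintegral_le (h : R -> R) : Tintegrable h -> Tintegrable (fun t => h t ^+ 2) ->
  (Rintegral mu D h) ^+ 2 <= 2 * pi * Rintegral mu D (fun t => h t ^+ 2).
Proof.
move=> r1 r2.
set I := Rintegral mu D h; set J := Rintegral mu D (fun t => h t ^+ 2); set L := 2 * pi.
have L0 : 0 < L by rewrite /L mulr_gt0 // pi_gt0.
set m := I / L.
have mL : m * L = I by rewrite /m mulfVK // gt_eqF.
have H0 : 0 <= Rintegral mu D (fun t => (h t - m) ^+ 2).
  by apply: Rintegral_ge0 => t _; exact: sqr_ge0.
have E : Rintegral mu D (fun t => (h t - m) ^+ 2) = J - 2 * m * I + m ^+ 2 * L.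
  have -> : (fun t => (h t - m) ^+ 2) = (fun t => (h t ^+ 2 + (- 2 * m) * h t) + m ^+ 2).
    by apply/funext => t; ring.
  rewrite RintegralD_T ?Rintegral_cst_T; last exact: Tintegrable_cst.
    by rewrite RintegralD_T ?RintegralZ_T //; [rewrite /I /J /L; ring | exact: TintegrableZ].
  by apply: TintegrableD => //; exact: TintegrableZ.
rewrite E in H0.
have -> : I ^+ 2 = L * (m ^+ 2 * L) by rewrite -mL; ring.
rewrite ler_pM2l //.
have -> : m ^+ 2 * L = 2 * m * I - m ^+ 2 * L by rewrite -mL; ring.
lra.
Qed.

Lemma ip_aeq (f f' g g' : fn R) : cmeas f -> cmeas f' -> cmeas g -> cmeas g' ->
  aeq f f' -> aeq g g' -> ip f g = ip f' g'.
Proof.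
move=> cf cf' cg cg' Ef Eg.
have [c1r c1i] := cmeasM cf (cmeas_conj cg).
have [c2r c2i] := cmeasM cf' (cmeas_conj cg').
have E : aeq (fun z => f z * (g z)^*) (fun z => f' z * (g' z)^*).
  by apply: aeq_mul => //; apply: aeq_map.
rewrite /ip; congr (_ +i* _); apply: Rintegral_aeq => //.
- by apply: aeS E => t H Dt; rewrite /reT H.
- by apply: aeS E => t H Dt; rewrite /imT H.
Qed.

Lemma ip_conj (f g : fn R) : L2 f -> L2 g -> ip g f = (ip f g)^*.
Proof.
move=> Hf Hg; rewrite /ip.
have -> : Rintegral mu D (reT (fun z => g z * (f z)^*)) =
          Rintegral mu D (reT (fun z => f z * (g z)^*)).
  apply: eq_Rintegral => t _; rewrite /reT.
  by case: (f (circ t)) => a b; case: (g (circ t)) => c d /=; ring.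
have -> : Rintegral mu D (imT (fun z => g z * (f z)^*)) =
          - Rintegral mu D (imT (fun z => f z * (g z)^*)).
  rewrite -RintegralN_T; last exact: (Tintegrable_imTM Hf (L2_conj Hg)).
  apply: eq_Rintegral => t _; rewrite /imT.
  by case: (f (circ t)) => a b; case: (g (circ t)) => c d /=; ring.
by [].
Qed.

Lemma ip_oneE (f : fn R) : ip f one = Rintegral mu D (reT f) +i* Rintegral mu D (imT f).
Proof.
rewrite /ip; congr (_ +i* _); apply: eq_Rintegral => t _;
  by rewrite /reT /imT /one ?ReM ?ImM /=; ring.
Qed.

(* With d = g - conj h, testing against x = cutoff(d) d turns the hypothesis
   into the vanishing of the integral of |d|^2 / (1 + |d|^2). *)
Lemma aeq_conj_of_ip (g h : fn R) : L2 g -> L2 h ->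
  let d := fun z => g z - (h z)^* in
  let x := fun z => cutoff d z * d z in
  ip g x = ip one (fun z => h z * x z) -> aeq g (fun z => (h z)^*).
Proof.
move=> Hg Hh d x H.
have cd : cmeas d := L2_cmeas (L2B Hg (L2_conj Hh)).
have Lx : L2 x := L2_Linf (Linf_cutoffM cd).
have Lhx : L2 (fun z => h z * x z).
  have := L2_mulLinf (Linf_cutoffM cd) Hh.
  have -> : (fun z => cutoff d z * d z * h z) = (fun z => h z * x z).
    by apply/funext => z; rewrite mulrC.
  by [].
have Hre := congr1 (@complex.Re R) H; rewrite /ip /= in Hre.
set phi := fun t => inv1pn (nrm2 (d (circ t))) * nrm2 (d (circ t)).
have r1 := Tintegrable_reTM Hg (L2_conj Lx).
have r2 := Tintegrable_reTM L2_one (L2_conj Lhx).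
have ephi t : reT (fun z => g z * (x z)^*) t - reT (fun z => one z * (h z * x z)^*) t = phi t.
  by rewrite /reT /x /cutoff /d /one /phi; exact: Re_mul_conj_sub.
have Hphi : Tintegrable phi by apply: (eq_Tintegrable (fun t _ => ephi t)); apply: TintegrableB.
have I0 : Rintegral mu D phi = 0.
  have -> : Rintegral mu D phi = Rintegral mu D (fun t =>
      reT (fun z => g z * (x z)^*) t - reT (fun z => one z * (h z * x z)^*) t).
    by apply: eq_Rintegral => t _; rewrite ephi.
  by rewrite (RintegralB measurable_Tdom r1 r2) Hre subrr.
have p0 t : D t -> 0 <= phi t.
  by move=> _; rewrite /phi mulr_ge0 // ?nrm2_ge0 // ltW // inv1pn_gt0.
apply: aeS (Rintegral_ae_eq0 Hphi p0 I0) => t Ht Dt; have := Ht Dt; rewrite /phi => /eqP.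
rewrite mulf_eq0 gt_eqF ?inv1pn_gt0 //= => /eqP /nrm2_eq0 /eqP.
by rewrite /d subr_eq0 => /eqP.
Qed.

(* The rank-one projection onto the constants (up to the factor 2 pi). *)
Definition mean_op : op R := fun f _ => ip f one.

Lemma ip_one_one : ip one one = (2 * pi)%:C.
Proof. by rewrite ip_oneE /reT /imT /one /= Rintegral_cst_T mul1r Rintegral_cst_T mul0r. Qed.

Lemma ip0_one : ip (fun _ => 0) one = 0.
Proof. by rewrite ip_oneE /reT /imT /= Rintegral_cst_T mul0r. Qed.

Lemma sqnorm_cst (k : R[i]) : sqnorm (fun _ => k) = nrm2 k * (2 * pi).
Proof. by rewrite /sqnorm (_ : abs2T _ = fun _ => nrm2 k) //; exact: Rintegral_cst_T. Qed.

Lemma sqnormE (f : fn R) : L2 f ->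
  sqnorm f = Rintegral mu D (fun t => reT f t ^+ 2) + Rintegral mu D (fun t => imT f t ^+ 2).
Proof.
move=> Hf; rewrite /sqnorm /abs2T RintegralD_T //.
  exact: (Tintegrable_sqr_reT Hf).
exact: (Tintegrable_sqr_imT Hf).
Qed.

Lemma bounded_mean_op : bounded_op mean_op.
Proof.
split.
- by move=> f _; exact: L2_cst.
- move=> f g Hf Hg E; apply: aeqW => z; rewrite /mean_op.
  by apply: ip_aeq => //; try exact: L2_cmeas; try exact: cmeas_cst; exact: aeq_refl.
- move=> c f g Hf Hg; apply: aeqW => z; rewrite /mean_op !ip_oneE.
  have rf := Tintegrable_reT Hf; have jf := Tintegrable_imT Hf.
  have rg := Tintegrable_reT Hg; have jg := Tintegrable_imT Hg.
  have -> : reT (fun z => c * f z + g z) =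
            (fun t => (Re c * reT f t + (- Im c) * imT f t) + reT g t).
    by apply/funext => t; rewrite /reT ReD ReM; ring.
  have -> : imT (fun z => c * f z + g z) =
            (fun t => (Re c * imT f t + Im c * reT f t) + imT g t).
    by apply/funext => t; rewrite /imT ImD ImM; ring.
  rewrite !RintegralD_T ?RintegralZ_T //;
    try solve [apply: TintegrableZ => // | apply: TintegrableD; apply: TintegrableZ => //].
  case: c => c1 c2 /=; apply/eqP; rewrite eq_complex /=.
  by apply/andP; split; apply/eqP; ring.
- exists ((2 * pi) ^+ 2) => f Hf.
  rewrite sqnorm_cst ip_oneE sqnormE // /nrm2 /=.
  have c1 := sqr_Rintegral_le (Tintegrable_reT Hf) (Tintegrable_sqr_reT Hf).
  have c2 := sqr_Rintegral_le (Tintegrable_imT Hf) (Tintegrable_sqr_imT Hf).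
  have L0 : 0 < 2 * pi :> R by rewrite mulr_gt0 // pi_gt0.
  set L := 2 * pi in c1 c2 L0 *.
  rewrite expr2; nra.
Qed.

(** * Bounded operators and Cuntz families *)

Section BoundedOp.
Variable A : op R.
Hypothesis HA : bounded_op A.

Lemma bop_L2 (f : fn R) : L2 f -> L2 (A f).
Proof. by case: HA => H _ _ _; exact: H. Qed.
Lemma bop_aeq (f g : fn R) : L2 f -> L2 g -> aeq f g -> aeq (A f) (A g).
Proof. by case: HA => _ H _ _; exact: H. Qed.
Lemma bop_lin (c : R[i]) (f g : fn R) : L2 f -> L2 g ->
  aeq (A (fun z => c * f z + g z)) (fun z => c * A f z + A g z).
Proof. by case: HA => _ _ H _; exact: H. Qed.
Lemma bop_ext (f g : fn R) : (forall z, f z = g z) -> aeq (A f) (A g).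
Proof. by move=> e; rewrite (funext e); exact: aeq_refl. Qed.
Lemma bop0 : aeq (A (fun _ => 0)) (fun _ => 0).
Proof.
have L0 : L2 (fun _ : R[i] => 0 : R[i]) by exact: L2_cst.
have E0 := bop_ext (g := fun z : R[i] => 1 * 0 + 0)
  (fun z => esym (etrans (addr0 _) (mul1r _))).
apply: aeS (aeq_trans E0 (bop_lin 1 L0 L0)) => t H Dt; have := H Dt; rewrite mul1r /= => e.
by apply: (addrI (A (fun _ => 0) (circ t))); rewrite addr0 -e.
Qed.
Lemma bop_aeq0 (f : fn R) : L2 f -> aeq f (fun _ => 0) -> aeq (A f) (fun _ => 0).
Proof. by move=> Hf H; apply: aeq_trans bop0; apply: bop_aeq => //; exact: L2_cst. Qed.
Lemma bopD (f g : fn R) : L2 f -> L2 g -> aeq (A (fun z => f z + g z)) (fun z => A f z + A g z).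
Proof.
move=> Hf Hg; apply: aeq_trans (aeq_trans (bop_ext (g := fun z => 1 * f z + g z) _)
  (bop_lin 1 Hf Hg)) _.
- by move=> z; rewrite mul1r.
- by apply: aeqW => z; rewrite mul1r.
Qed.
Lemma bopZ (c : R[i]) (f : fn R) : L2 f -> aeq (A (fun z => c * f z)) (fun z => c * A f z).
Proof.
move=> Hf; have L0 : L2 (fun _ : R[i] => 0 : R[i]) by exact: L2_cst.
apply: aeq_trans (aeq_trans (bop_ext (g := fun z => c * f z + 0) _) (bop_lin c Hf L0)) _.
- by move=> z; rewrite addr0.
- by apply: aeS bop0 => t H0 Dt; rewrite H0 // addr0.
Qed.
Lemma bop_sum (I : finType) (F : I -> fn R) : (forall i, L2 (F i)) ->
  aeq (A (fun z => \sum_i F i z)) (fun z => \sum_i A (F i) z).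
Proof.
move=> H.
suff Hs (s : seq I) : aeq (A (fun z => \sum_(i <- s) F i z)) (fun z => \sum_(i <- s) A (F i) z).
  exact: Hs.
have Ls (s : seq I) := @L2_big I s F H.
elim: s => [|a s IH].
  have -> : (fun z => \sum_(i <- [::]) F i z) = (fun _ => 0).
    by apply/funext => z; rewrite big_nil.
  by apply: aeq_trans bop0 _; apply: aeqW => z; rewrite big_nil.
have -> : (fun z => \sum_(i <- a :: s) F i z) = (fun z => F a z + \sum_(i <- s) F i z).
  by apply/funext => z; rewrite big_cons.
apply: aeq_trans (bopD (H a) (Ls s)) _.
by apply: aeS IH => t H1 Dt; rewrite big_cons H1.
Qed.
Lemma bop_sumZ (I : finType) (c : I -> R[i]) (F : I -> fn R) : (forall i, L2 (F i)) ->
  aeq (A (fun z => \sum_i c i * F i z)) (fun z => \sum_i c i * A (F i) z).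
Proof.
move=> H; apply: aeq_trans (bop_sum (F := fun i z => c i * F i z) _) _.
  by move=> i; apply: L2Z.
by apply: aeq_sum => i; exact: bopZ.
Qed.
End BoundedOp.

Section Cuntz.
Variable N : nat.
Variables S Ss : 'I_N -> op R.
Hypothesis HS : cuntz S Ss.

Lemma cuntz_bop i : bounded_op (S i).
Proof. by case: HS => H _ _ _; exact: H. Qed.
Lemma cuntz_bop_adj i : bounded_op (Ss i).
Proof. by case: HS => _ H _ _; case: (H i). Qed.
Lemma cuntz_L2 i (f : fn R) : L2 f -> L2 (S i f).
Proof. exact: (bop_L2 (cuntz_bop i)). Qed.
Lemma cuntz_L2_adj i (f : fn R) : L2 f -> L2 (Ss i f).
Proof. exact: (bop_L2 (cuntz_bop_adj i)). Qed.

Lemma cuntz_adjoint i (f g : fn R) : L2 f -> L2 g -> ip (S i f) g = ip f (Ss i g).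
Proof. by case: HS => _ H _ _; case: (H i) => _ H'; exact: H'. Qed.
Lemma cuntz_adjoint_adj i (w x : fn R) : L2 w -> L2 x -> ip (Ss i w) x = ip w (S i x).
Proof.
move=> Hw Hx.
rewrite (ip_conj Hx (cuntz_L2_adj i Hw)) -(cuntz_adjoint i Hx Hw).
by rewrite -(ip_conj (cuntz_L2 i Hx) Hw).
Qed.
Lemma cuntz_orth i j (f : fn R) : L2 f ->
  aeq (Ss i (S j f)) (fun z => if i == j then f z else 0).
Proof. by case: HS => _ _ H _ Hf; have := H i j f Hf; rewrite /compop; case: (i == j). Qed.
Lemma cuntz_sum (f : fn R) : L2 f -> aeq (fun z => \sum_i S i (Ss i f) z) f.
Proof. by case: HS => _ _ _ H; exact: H. Qed.

Lemma cuntz_adj_sum k (X : 'I_N -> fn R) : (forall i, L2 (X i)) ->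
  aeq (Ss k (fun z => \sum_i S i (X i) z)) (X k).
Proof.
move=> HX; apply: aeq_trans (bop_sum (cuntz_bop_adj k) (fun i => cuntz_L2 i (HX i))) _.
apply: (@aeq_sum_delta _ k (fun i => Ss k (S i (X i)))) => i.
by apply: aeq_trans (cuntz_orth k i (HX i)) _; apply: aeqW => z; case: eqVneq => [->|].
Qed.

Lemma L2_alphaS (A : op R) (f : fn R) :
  (forall g, L2 g -> L2 (A g)) -> L2 f -> L2 (alphaS S Ss A f).
Proof.
by move=> HA Hf; apply: L2_sum => i; apply: cuntz_L2; apply: HA; exact: cuntz_L2_adj.
Qed.

Section Intertwining.
Variable b : R[i] -> R[i].
Hypothesis HI : intertwines b S Ss.

Lemma intertwines_S_mul j (phi f : fn R) : Linf phi -> L2 f ->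
  aeq (S j (fun z => phi z * f z)) (fun z => phi (b z) * S j f z).
Proof.
move=> Hp Hf; have Hf' := cuntz_L2 j Hf.
have H := HI Hp Hf'.
apply: aeq_trans _ H; apply: aeq_sym; rewrite /alphaS /mulop.
apply: (@aeq_sum_delta _ j (fun k => S k (fun z => phi z * Ss k (S j f) z))) => k.
have L1 : L2 (fun z => phi z * Ss k (S j f) z) := L2_mulLinf Hp (cuntz_L2_adj k Hf').
have E : aeq (fun z => phi z * Ss k (S j f) z)
             (fun z => phi z * (if k == j then f z else 0)).
  exact: (aeq_mull phi (cuntz_orth k j Hf)).
case: eqVneq => [->|ne] in E L1 *.
- apply: (bop_aeq (cuntz_bop j) L1 (L2_mulLinf Hp Hf)).
  by apply: aeq_trans E _; apply: aeqW => z; rewrite ?eqxx.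
- apply: (bop_aeq0 (cuntz_bop k) L1).
  by apply: aeq_trans E _; apply: aeqW => z; rewrite ?(negPf ne) mulr0.
Qed.

Lemma intertwines_Ss_mul i (phi y Z : fn R) : Linf phi -> L2 y -> L2 Z ->
  aeq Z (fun z => phi (b z) * y z) -> aeq (Ss i Z) (fun z => phi z * Ss i y z).
Proof.
move=> Hp Hy HZ EZ.
have HW : L2 (alphaS S Ss (mulop phi) y).
  by apply: L2_alphaS => // g Hg; apply: L2_mulLinf.
apply: aeq_trans (bop_aeq (cuntz_bop_adj i) HZ HW (aeq_trans EZ (aeq_sym (HI Hp Hy)))) _.
exact: (@cuntz_adj_sum i (fun k => mulop phi (Ss k y))
  (fun k => L2_mulLinf Hp (cuntz_L2_adj k Hy))).
Qed.
End Intertwining.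
End Cuntz.

Lemma commutant_mulop (T : op R) :
  (forall f, L2 f -> L2 (T f)) ->
  (forall phi f, Linf phi -> L2 f ->
    aeq (T (fun z => phi z * f z)) (fun z => phi z * T f z)) ->
  forall f, L2 f -> aeq (T f) (fun z => T one z * f z).
Proof.
move=> HT1 HTc f Hf.
have cf := L2_cmeas Hf.
have h1 := HTc _ _ (Linf_cutoff cf) Hf.
have h2 := HTc _ _ (Linf_cutoffM cf) L2_one.
have e : (fun z => cutoff f z * f z * one z) = (fun z => cutoff f z * f z).
  by apply/funext => z; rewrite /one mulr1.
rewrite e in h2.
apply: aeS (aeq_trans (aeq_sym h1) h2) => t H Dt; have := H Dt => /= {}H.
by apply: (mulfI (cutoff_neq0 f (circ t))); rewrite H; ring.
Qed.

Definition adj_mulop (N : nat) (S1s S2 : 'I_N -> op R) (u : 'I_N -> 'I_N -> fn R) : Prop :=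
  forall i j w, L2 w ->
    L2 (fun z => u i j z * w z) /\ aeq (S1s i (S2 j w)) (fun z => u i j z * w z).

Section CuntzPair.
Variable N : nat.
Variables S1 S1s S2 S2s : 'I_N -> op R.
Hypotheses (H1 : cuntz S1 S1s) (H2 : cuntz S2 S2s).

Lemma linked_of_adj_mulop (u : 'I_N -> 'I_N -> fn R) :
  adj_mulop S1s S2 u -> linked S1 S2 u.
Proof.
move=> Hu j f Hf; have Hf' := cuntz_L2 H2 j Hf.
apply: aeq_trans (aeq_sym (cuntz_sum H1 Hf')) _.
apply: aeq_sum => i; have [Luf Tf] := Hu i j f Hf.
by apply: (bop_aeq (cuntz_bop H1 i) (cuntz_L2_adj H1 i Hf')); [exact: Luf | exact: Tf].
Qed.

Lemma adj_mulop_of_linked (u : 'I_N -> 'I_N -> fn R) :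
  (forall i j, Linf (u i j)) -> linked S1 S2 u -> adj_mulop S1s S2 u.
Proof.
move=> Lu Hl i j w Hw.
have HX k : L2 (mulop (u k j) w) by exact: (L2_mulLinf (Lu k j) Hw).
split; first exact: HX.
apply: aeq_trans (bop_aeq (cuntz_bop_adj H1 i) (cuntz_L2 H2 j Hw)
  (L2_sum (fun k => cuntz_L2 H1 k (HX k))) (Hl j w Hw)) _.
exact: (@cuntz_adj_sum _ S1 S1s H1 i (fun k => mulop (u k j) w) HX).
Qed.

Lemma adj_expand (u : 'I_N -> 'I_N -> fn R) : adj_mulop S1s S2 u ->
  forall i y, L2 y -> aeq (S1s i y) (fun z => \sum_j u i j z * S2s j y z).
Proof.
move=> Hu i y Hy.
have HX j : L2 (S2 j (S2s j y)).
  by apply: (cuntz_L2 H2); exact: (cuntz_L2_adj H2).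
apply: aeq_trans (bop_aeq (cuntz_bop_adj H1 i) Hy (L2_sum HX) (aeq_sym (cuntz_sum H2 Hy))) _.
apply: aeq_trans (bop_sum (cuntz_bop_adj H1 i) HX) _.
by apply: aeq_sum => j; exact: (Hu i j _ (cuntz_L2_adj H2 j Hy)).2.
Qed.

Lemma alphaS_linked (u : 'I_N -> 'I_N -> fn R) : (forall i j, Linf (u i j)) ->
  linked S1 S2 u -> forall (A : op R) f, (forall g, L2 g -> L2 (A g)) -> L2 f ->
  aeq (alphaS S2 S2s A f) (fun z => \sum_i S1 i (fun z => \sum_j u i j z * A (S2s j f) z) z).
Proof.
move=> Lu Hl A f HA Hf.
have LA j : L2 (A (S2s j f)) by apply: HA; exact: (cuntz_L2_adj H2).
apply: aeq_trans (aeq_sum (fun j => Hl j _ (LA j))) _.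
apply: aeq_trans (aeqW (fun z => exchange_big _ _ _ _ _ _)) _.
apply: aeq_sum => i; apply: aeq_sym.
apply: (bop_sum (cuntz_bop H1 i) (F := fun j => mulop (u i j) (A (S2s j f)))) => j.
exact: L2_mulLinf.
Qed.

(* S1_i^* S2_j is multiplication by the function S1_i^* S2_j 1. *)
Definition cuntz_coef i j : fn R := S1s i (S2 j one).

Lemma adj_mulop_cuntz_coef (b : R[i] -> R[i]) :
  intertwines b S1 S1s -> intertwines b S2 S2s -> adj_mulop S1s S2 cuntz_coef.
Proof.
move=> I1 I2 i j w Hw.
have LT g : L2 g -> L2 (S1s i (S2 j g)).
  by move=> Hg; apply: (cuntz_L2_adj H1); apply: (cuntz_L2 H2).
have Tcomm phi f : Linf phi -> L2 f ->
    aeq (S1s i (S2 j (fun z => phi z * f z))) (fun z => phi z * S1s i (S2 j f) z).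
  move=> Hp Hf; apply: (intertwines_Ss_mul H1 I1 i Hp (cuntz_L2 H2 j Hf)).
  - by apply: (cuntz_L2 H2); exact: L2_mulLinf.
  - exact: (intertwines_S_mul H2 I2 j Hp Hf).
have Tw : aeq (S1s i (S2 j w)) (fun z => cuntz_coef i j z * w z).
  exact: (@commutant_mulop (fun f => S1s i (S2 j f)) LT Tcomm w Hw).
split; last exact: Tw.
apply: (L2_aeq (LT _ Hw) _ Tw).
by apply: cmeasM; apply: L2_cmeas => //; exact: (LT _ L2_one).
Qed.

End CuntzPair.

(** * Two intertwining Cuntz families differ by a unitary *)

Section Intertwining.
Variable N : nat.
Variable b : R[i] -> R[i].
Variables S1 S1s S2 S2s : 'I_N -> op R.
Hypotheses (H1 : cuntz S1 S1s) (H2 : cuntz S2 S2s).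
Hypotheses (I1 : intertwines b S1 S1s) (I2 : intertwines b S2 S2s).

Local Notation u := (cuntz_coef S1s S2).
Local Notation v := (cuntz_coef S2s S1).

Lemma cuntz_coef_inverse i l :
  aeq (fun z => \sum_j u i j z * v j l z) (fun _ => if i == l then 1 else 0).
Proof.
have Ly : L2 (S1 l one) := cuntz_L2 H1 l L2_one.
apply: aeq_trans (aeq_sym (adj_expand H1 H2 (adj_mulop_cuntz_coef H1 H2 I1 I2) i Ly)) _.
apply: aeq_trans (cuntz_orth H1 i l L2_one) _.
by apply: aeqW => z; case: (i == l).
Qed.

Lemma cuntz_coef_conj i j : aeq (u i j) (fun z => (v j i z)^*).
Proof.
have Lu : L2 (u i j) := cuntz_L2_adj H1 i (cuntz_L2 H2 j L2_one).
have Lv : L2 (v j i) := cuntz_L2_adj H2 j (cuntz_L2 H1 i L2_one).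
move: (aeq_conj_of_ip Lu Lv) => /=; apply.
set d := fun z => _ - _.
have cd : cmeas d := L2_cmeas (L2B Lu (L2_conj Lv)).
have Lx : L2 (fun z => cutoff d z * d z) := L2_Linf (Linf_cutoffM cd).
rewrite /cuntz_coef (cuntz_adjoint_adj H1 i (cuntz_L2 H2 j L2_one) Lx).
rewrite (cuntz_adjoint H2 j L2_one (cuntz_L2 H1 i Lx)).
have [Lvx Tvx] := adj_mulop_cuntz_coef H2 H1 I2 I1 j i Lx.
apply: ip_aeq => //; try exact: (L2_cmeas L2_one); try exact: aeq_refl.
- exact: (L2_cmeas (cuntz_L2_adj H2 j (cuntz_L2 H1 i Lx))).
- exact: (L2_cmeas Lvx).
Qed.

Lemma cuntz_coef_rows i j :
  aeq (fun z => \sum_k u i k z * (u j k z)^*) (fun _ => if i == j then 1 else 0).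
Proof.
apply: aeq_trans _ (cuntz_coef_inverse i j); apply: aeq_sum => k; apply: aeq_mull.
by apply: aeS (cuntz_coef_conj j k) => t H Dt; rewrite H //; exact: conjcK.
Qed.

Lemma cuntz_coef_unitary : unitary_Linf u.
Proof.
split; last 1 first.
- move=> i j; apply: aeS (ae_forall (fun i => ae_forall (fun j => cuntz_coef_rows i j))).
  move=> t rows Dt.
  pose M := \matrix_(k < N, l < N) u k l (circ t).
  have rowsM k l : \sum_m M k m * (M l m)^* = if k == l then 1 else 0.
    by have /= <- := rows k l Dt; apply: eq_bigr => m _; rewrite !mxE.
  rewrite /= -(unitary_cols_of_rows rowsM i j).
  by apply: eq_bigr => k _; rewrite !mxE.
- move=> i j; split; first exact: (L2_cmeas (cuntz_L2_adj H1 i (cuntz_L2 H2 j L2_one))).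
  exists 1; apply: aeS (cuntz_coef_rows i i) => t H Dt; have := H Dt; rewrite eqxx => /= H'.
  have e : \sum_k nrm2 (u i k (circ t)) = 1.
    have := congr1 (@complex.Re R) H'; rewrite Re_sum /= => <-.
    by apply: eq_bigr => k _; rewrite mulc_conj.
  rewrite abs2TE -e (bigD1 j) //= lerDl; apply: sumr_ge0 => k _; exact: nrm2_ge0.
- exact: cuntz_coef_rows.
Qed.

End Intertwining.

(** * Cuntz families linked by a unitary *)

Section Linked.
Variable N : nat.
Variables S1 S1s S2 S2s : 'I_N -> op R.
Variable u : 'I_N -> 'I_N -> fn R.
Hypotheses (H1 : cuntz S1 S1s) (H2 : cuntz S2 S2s).
Hypotheses (Lu : forall i j, Linf (u i j)) (HL : linked S1 S2 u).

Let Hu : adj_mulop S1s S2 u := adj_mulop_of_linked H1 H2 Lu HL.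

Lemma alphaS_mulop_linked (phi f : fn R) : Linf phi -> L2 f ->
  aeq (alphaS S2 S2s (mulop phi) f) (alphaS S1 S1s (mulop phi) f).
Proof.
move=> Hp Hf.
apply: aeq_trans (alphaS_linked H1 H2 Lu HL (fun g Hg => L2_mulLinf Hp Hg) Hf) _.
apply: aeq_sum => i; apply: (bop_aeq (cuntz_bop H1 i)).
- apply: L2_sum => j; apply: (L2_mulLinf (Lu i j)).
  exact: (L2_mulLinf Hp (cuntz_L2_adj H2 j Hf)).
- exact: (L2_mulLinf Hp (cuntz_L2_adj H1 i Hf)).
- apply: aeq_trans (aeq_mull phi (aeq_sym (adj_expand H1 H2 Hu i Hf))).
  by apply: aeqW => z; rewrite /mulop mulr_sumr; apply: eq_bigr => j _; ring.
Qed.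

Lemma intertwines_linked b : intertwines b S1 S1s <-> intertwines b S2 S2s.
Proof.
split=> HI phi Hp f Hf.
- exact: (aeq_trans (alphaS_mulop_linked Hp Hf) (HI phi Hp f Hf)).
- exact: (aeq_trans (aeq_sym (alphaS_mulop_linked Hp Hf)) (HI phi Hp f Hf)).
Qed.

Lemma alphaS_eq_of_constant : constant_mx u ->
  forall A : op R, bounded_op A -> opeq (alphaS S1 S1s A) (alphaS S2 S2s A).
Proof.
move=> [c Hc] A HA f Hf.
have LS j : L2 (S2s j f) by exact: (cuntz_L2_adj H2).
apply: aeq_sym; apply: aeq_trans (alphaS_linked H1 H2 Lu HL (bop_L2 HA) Hf) _.
apply: aeq_sum => i; apply: (bop_aeq (cuntz_bop H1 i)).
- by apply: L2_sum => j; apply: (L2_mulLinf (Lu i j)); exact: (bop_L2 HA (LS j)).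
- exact: (bop_L2 HA (cuntz_L2_adj H1 i Hf)).
- have Eu : aeq (fun z => \sum_j u i j z * A (S2s j f) z) (fun z => \sum_j c i j * A (S2s j f) z).
    by apply: aeq_sum => j; apply: aeq_mul => //; exact: aeq_refl.
  apply: aeq_trans Eu (aeq_trans (aeq_sym (bop_sumZ HA (c i) LS)) _).
  apply: (bop_aeq HA).
  + by apply: L2_sum => j; apply: L2Z.
  + exact: (cuntz_L2_adj H1).
  + apply: aeq_trans _ (aeq_sym (adj_expand H1 H2 Hu i Hf)).
    by apply: aeq_sum => j; apply: aeq_mul => //; [exact: aeq_sym | exact: aeq_refl].
Qed.

Lemma mean_op_adj_S2_one j l (w : R[i]) :
  mean_op (S2s j (S2 l one)) w = if j == l then (2 * pi)%:C else 0.
Proof.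
rewrite /mean_op (ip_aeq _ _ _ _ (cuntz_orth H2 j l L2_one) (aeq_refl _)).
- by case: (j == l); [exact: ip_one_one | exact: ip0_one].
- exact: (L2_cmeas (cuntz_L2_adj H2 j (cuntz_L2 H2 l L2_one))).
- by case: (j == l); exact: cmeas_cst.
- exact: (L2_cmeas L2_one).
- exact: (L2_cmeas L2_one).
Qed.

Lemma constant_of_alphaS_eq :
  (forall A : op R, bounded_op A -> opeq (alphaS S1 S1s A) (alphaS S2 S2s A)) ->
  constant_mx u.
Proof.
move=> Ha; exists (fun k l => ip (u k l) one / (2 * pi)%:C) => k l.
set f := S2 l one.
have Lf : L2 f := cuntz_L2 H2 l L2_one.
have LP := bop_L2 bounded_mean_op.
have LPc g : L2 (mean_op g) by exact: L2_cst.
have EL : aeq (S1s k (alphaS S1 S1s mean_op f)) (mean_op (S1s k f)).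
  exact: (@cuntz_adj_sum _ S1 S1s H1 k (fun i => mean_op (S1s i f)) (fun i => LPc _)).
have LW i : L2 (fun z => \sum_j u i j z * mean_op (S2s j f) z).
  by apply: L2_sum => j; exact: (L2_mulLinf (Lu i j) (L2_cst _)).
have ER : aeq (S1s k (alphaS S2 S2s mean_op f)) (fun z => \sum_j u k j z * mean_op (S2s j f) z).
  apply: aeq_trans (bop_aeq (cuntz_bop_adj H1 k) (L2_alphaS H2 LP Lf)
    (L2_sum (fun i => cuntz_L2 H1 i (LW i))) (alphaS_linked H1 H2 Lu HL LP Lf)) _.
  exact: (@cuntz_adj_sum _ S1 S1s H1 k _ LW).
have E := aeq_trans (aeq_sym EL) (aeq_trans (bop_aeq (cuntz_bop_adj H1 k)
  (L2_alphaS H1 LP Lf) (L2_alphaS H2 LP Lf) (Ha _ bounded_mean_op f Lf)) ER).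
have meanL z : mean_op (S1s k f) z = ip (u k l) one.
  rewrite /mean_op; have [_] := Hu k l L2_one.
  have -> : (fun z => u k l z * one z) = u k l by apply/funext => w; rewrite /one mulr1.
  move=> T; apply: ip_aeq => //; try exact: (L2_cmeas L2_one); last exact: aeq_refl.
  - exact: (L2_cmeas (cuntz_L2_adj H1 k Lf)).
  - exact: (L2_cmeas (L2_Linf (Lu k l))).
apply: aeS E => t H Dt; have := H Dt.
rewrite meanL (eq_bigr (fun j => u k j (circ t) * (if j == l then (2 * pi)%:C else 0)));
  last by move=> j _; rewrite mean_op_adj_S2_one.
rewrite (bigD1 l) //= eqxx big1 ?addr0; last by move=> j /negPf ->; rewrite mulr0.
move=> ->.
have nz : (2 * pi)%:C != 0 :> R[i].
  by rewrite eq_complex /= negb_and gt_eqF // mulr_gt0 // pi_gt0.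
by rewrite mulfK.
Qed.

End Linked.

End Corollary.

Local Close Scope complex_scope.
Local Close Scope classical_set_scope.
Unset Implicit Arguments.

(* The argument uses only the relation alpha_S o pi = pi o beta, for an
   arbitrary symbol b. *)
Theorem corollary5p3 (R : realType) (N : nat) (a : 'I_N -> R[i])
  (ha : forall j, `|a j| < 1) :
  (forall S1 S1s S2 S2s : 'I_N -> op R,
     cuntz S1 S1s -> cuntz S2 S2s ->
     intertwines (blaschke a) S1 S1s -> intertwines (blaschke a) S2 S2s ->
     exists u : 'I_N -> 'I_N -> fn R, unitary_Linf u /\ linked S1 S2 u) /\
  (forall (S1 S1s S2 S2s : 'I_N -> op R) (u : 'I_N -> 'I_N -> fn R),
     cuntz S1 S1s -> cuntz S2 S2s -> unitary_Linf u -> linked S1 S2 u ->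
     (intertwines (blaschke a) S1 S1s <-> intertwines (blaschke a) S2 S2s) /\
     ((forall A : op R, bounded_op A -> opeq (alphaS S1 S1s A) (alphaS S2 S2s A))
        <-> constant_mx u)).
Proof.
split=> [S1 S1s S2 S2s H1 H2 I1 I2 | S1 S1s S2 S2s u H1 H2 [Lu _ _] HL].
  exists (cuntz_coef S1s S2); split; first exact: (cuntz_coef_unitary H1 H2 I1 I2).
  exact: (linked_of_adj_mulop H1 H2 (adj_mulop_cuntz_coef H1 H2 I1 I2)).
split; first exact: (intertwines_linked H1 H2 Lu HL).
split; first exact: (constant_of_alphaS_eq H1 H2 Lu HL).
exact: (alphaS_eq_of_constant H1 H2 Lu HL).
Qed.
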